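(* Let $0<c<1$, let $(v^*,u^* )$ be the unique saddle point of $\min_v\max_u E(v,u)$, and let $$L_c(v,u)=\frac{\alpha}{2}\sum_s|v_s-v^*_s|^2+\tau\Big(\sum_{s,a}\Big(u^*_{sa}\log\frac{u^*_{sa}}{u_{sa}}+u_{sa}-u^*_{sa}\Big)+\frac{c}{1-c}\sum_s\Big(\tilde u^*_s\log\frac{\tilde u^*_s}{\tilde u_s}+\tilde u_s-\tilde u^*_s\Big)\Big).$$ Consider the interpolating natural gradient dynamics on $\mathbb{R}^{|S|}\times\mathbb{R}^{|S|\times|A|}_{>0}$: $$\frac{dv_{s'}}{dt}=-\Big(v_{s'}-\frac1\alpha\sum_{s,a}K_{ass'}u_{sa}\Big),\ s'\in S,$$ $$\frac{du_{s\cdot}}{dt}=-\tilde u_s\big(\mathrm{diag}(\pi_{s\cdot})-c\,\pi_{s\cdot}\pi_{s\cdot}^{\mathsf T}\big)\Big(\log\frac{u_{s\cdot}}{\tilde u_s}-\frac1\tau\Big(r_{s\cdot}-\sum_{s'}K_{\cdot ss'}v_{s'}\Big)\Big),\ s\in S,$$ where $\pi_{sa}=u_{sa}/\tilde u_s$. Then $L_c$ is a Lyapunov function for this dynamics: $\frac{dL_c}{dt}\le0$ along trajectories, and the only trajectory along which $\frac{dL_c}{dt}=0$ is the constant trajectory $(v,u)=(v^*,u^* )$.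
   Context: Finite MDP: state space $S$, action space $A$, transition probabilities $P_{ass'}$ (with $\sum_{s'}P_{ass'}=1$), rewards $r_{sa}\ge0$, discount $\gamma\in(0,1)$, regularization $\tau>0$, and $\alpha>0$. $K_{ass'}=\delta_{ss'}-\gamma P_{ass'}$, $\tilde u_s=\sum_a u_{sa}$. For fixed $s$, $u_{s\cdot},\pi_{s\cdot},r_{s\cdot}\in\mathbb{R}^{|A|}$ are the vectors indexed by $a$, $K_{\cdot ss'}\in\mathbb{R}^{|A|}$ has $a$-th entry $K_{ass'}$, logarithms and divisions of vectors are entrywise, and $\mathrm{diag}(x)$ is the diagonal matrix with diagonal $x$. $E(v,u)=\frac{\alpha}{2}\sum_s v_s^2+\sum_{s,a}u_{sa}(r_{sa}-\sum_{s'}K_{ass'}v_{s'})-\tau\sum_{s,a}u_{sa}\log(u_{sa}/\tilde u_s)$; this min-max problem has a unique saddle point $(v^*,u^* )$ with $u^*_{sa}>0$. *)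

From HB Require Import structures.
From mathcomp Require Import all_boot all_order all_algebra.
From mathcomp Require Import all_classical all_reals all_analysis.
Set Implicit Arguments. Unset Strict Implicit. Unset Printing Implicit Defensive.
Import Order.TTheory GRing.Theory Num.Theory.
Import numFieldNormedType.Exports.
Local Open Scope ring_scope.

Section MDP.
Variables (R : realType) (S A : finType).

(* P s a s' = P_{a s s'} : probability of moving from s to s' under action a *)
Definition Kmat (gamma : R) (P : S -> A -> S -> R) (s : S) (a : A) (s' : S) : R :=
  (s == s')%:R - gamma * P s a s'.

Definition utilde (u : S -> A -> R) (s : S) : R := \sum_(a : A) u s a.

Definition pol (u : S -> A -> R) (s : S) (a : A) : R := u s a / utilde u s.

Definition Efun (alpha tau gamma : R) (P : S -> A -> S -> R) (r : S -> A -> R)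
    (v : S -> R) (u : S -> A -> R) : R :=
  alpha / 2 * \sum_(s : S) v s ^+ 2
  + \sum_(s : S) \sum_(a : A)
      u s a * (r s a - \sum_(s' : S) Kmat gamma P s a s' * v s')
  - tau * \sum_(s : S) \sum_(a : A) u s a * ln (u s a / utilde u s).

Definition is_saddle (alpha tau gamma : R) (P : S -> A -> S -> R) (r : S -> A -> R)
    (vstar : S -> R) (ustar : S -> A -> R) : Prop :=
  (forall s a, 0 < ustar s a) /\
  (forall v : S -> R,
      Efun alpha tau gamma P r vstar ustar <= Efun alpha tau gamma P r v ustar) /\
  (forall u : S -> A -> R, (forall s a, 0 < u s a) ->
      Efun alpha tau gamma P r vstar u <= Efun alpha tau gamma P r vstar ustar).

Definition Lc (alpha tau c : R) (vstar : S -> R) (ustar : S -> A -> R)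
    (v : S -> R) (u : S -> A -> R) : R :=
  alpha / 2 * \sum_(s : S) (v s - vstar s) ^+ 2
  + tau * ( \sum_(s : S) \sum_(a : A)
              (ustar s a * ln (ustar s a / u s a) + u s a - ustar s a)
          + c / (1 - c) * \sum_(s : S)
              (utilde ustar s * ln (utilde ustar s / utilde u s)
               + utilde u s - utilde ustar s)).

Definition gvec (tau gamma : R) (P : S -> A -> S -> R) (r : S -> A -> R)
    (v : S -> R) (u : S -> A -> R) (s : S) (a : A) : R :=
  ln (u s a / utilde u s) - tau^-1 * (r s a - \sum_(s' : S) Kmat gamma P s a s' * v s').

Definition v_rhs (alpha gamma : R) (P : S -> A -> S -> R)
    (v : S -> R) (u : S -> A -> R) (s' : S) : R :=
  - (v s' - alpha^-1 * \sum_(s : S) \sum_(a : A) Kmat gamma P s a s' * u s a).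

(* right-hand side of the u-equation:
   - \tilde u_s (diag(pi_s) - c pi_s pi_s^T) g_s, written entrywise *)
Definition u_rhs (tau gamma c : R) (P : S -> A -> S -> R) (r : S -> A -> R)
    (v : S -> R) (u : S -> A -> R) (s : S) (a : A) : R :=
  - (utilde u s *
      (pol u s a * gvec tau gamma P r v u s a
       - c * pol u s a * \sum_(b : A) pol u s b * gvec tau gamma P r v u s b)).

Definition is_trajectory (alpha tau gamma c : R) (P : S -> A -> S -> R)
    (r : S -> A -> R) (t0 t1 : R) (v : R -> S -> R) (u : R -> S -> A -> R) : Prop :=
  forall t, t0 < t < t1 ->
    (forall s a, 0 < u t s a) /\
    (forall s', derivable (fun x => v x s') t 1 /\
                derive1 (fun x => v x s') t = v_rhs alpha gamma P (v t) (u t) s') /\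
    (forall s a, derivable (fun x => u x s a) t 1 /\
                derive1 (fun x => u x s a) t = u_rhs tau gamma c P r (v t) (u t) s a).

End MDP.

(* Along a trajectory, [d Lc / dt = - alpha |v - vstar|^2
   - tau \sum_s \sum_a (u - ustar) (log pi - log pistar)].  The cross terms
   cancel by the two saddle conditions: minimality in [v] gives
   [alpha vstar = K^T ustar], and the Gibbs variational principle for the
   maximisation in [u] gives [tau log pistar = r - K vstar].  The [u]-flow is
   preconditioned precisely so that it pairs with the gradient of [Lc] to
   [(u - ustar) . g].  Per state the remaining sum equals
   [U KL(pi | pistar) + Ustar KL(pistar | pi)] with [U = utilde u], hence is
   nonnegative and vanishes only for [pi = pistar].
   If [d Lc / dt = 0] on the interval, then [v = vstar] and [pi = pistar]
   there, so [dv/dt = 0] forces [K^T u = K^T ustar]; as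
   [u - ustar = (U - Ustar) pistar] has no cancellation inside a state, the
   [l1]-contraction of [gamma P] yields [U = Ustar], i.e. [u = ustar]. *)

From HB Require Import structures.
From mathcomp Require Import all_boot all_order all_algebra.
From mathcomp Require Import all_classical all_reals all_analysis.
From mathcomp Require Import ring lra.
Import Order.TTheory GRing.Theory Num.Theory.
Import numFieldNormedType.Exports.
Local Open Scope ring_scope.

Section RealFacts.
Context {R : realType}.
Implicit Types (p q x : R) (f : R -> R).

Lemma ln_le_subr1 x : 0 < x -> ln x <= x - 1.
Proof. by move=> x0; have := expR_ge1Dx (ln x); rewrite lnK ?posrE // => h; lra. Qed.

Lemma ln_eq_subr1 x : 0 < x -> ln x = x - 1 -> x = 1.
Proof.
move=> x0 hx; apply/eqP; rewrite -(ln_eq0 x0); apply/negPn/negP => /expR_gt1Dx.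
by rewrite lnK ?posrE // hx; lra.
Qed.

Lemma sumr_gt0_at {I : finType} (i : I) {w : I -> R} :
  (forall j, 0 < w j) -> 0 < \sum_j w j.
Proof.
move=> w_gt0; rewrite (bigD1 i) //= ltr_pwDl //.
by apply: sumr_ge0 => j _; exact: ltW.
Qed.

Definition kl_div p q := p * ln (p / q) + q - p.

Lemma kl_divE p q : 0 < p -> 0 < q -> kl_div p q = p * (q / p - 1 - ln (q / p)).
Proof.
move=> p0 q0; rewrite /kl_div !ln_div ?posrE //.
by field; rewrite gt_eqF.
Qed.

Lemma kl_div_ge0 p q : 0 < p -> 0 < q -> 0 <= kl_div p q.
Proof.
move=> p0 q0; rewrite kl_divE //; apply: mulr_ge0; first exact: ltW.
by rewrite subr_ge0 ln_le_subr1 ?divr_gt0.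
Qed.

Lemma kl_div_eq0 p q : 0 < p -> 0 < q -> kl_div p q = 0 -> p = q.
Proof.
move=> p0 q0; rewrite kl_divE // => /eqP; rewrite mulf_eq0 gt_eqF //= subr_eq0.
move=> /eqP/esym/(ln_eq_subr1 _ (divr_gt0 q0 p0))/(congr1 ( *%R^~ p)).
by rewrite mulfVK ?gt_eqF // mul1r => ->.
Qed.

Lemma is_derive_fsum {I : finType} {h : I -> R -> R} {dh : I -> R} {x : R} :
  (forall i, is_derive x 1 (h i) (dh i)) ->
  is_derive x 1 (fun y => \sum_i h i y) (\sum_i dh i).
Proof.
move=> hd; rewrite -fct_sumE.
by elim/big_ind2 : _ => // *; [exact: is_derive_cst | exact: is_deriveD].
Qed.

Lemma is_derive_sqr_sub {f df} (b : R) {x : R} : is_derive x 1 f df ->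
  is_derive x 1 (fun y => (f y - b) ^+ 2) (2 * (f x - b) * df).
Proof.
move=> fdf; have fb : is_derive x 1 (fun y => f y - b) (df - 0).
  exact: is_deriveB.
rewrite subr0 in fb; under eq_fun do rewrite expr2.
apply: is_derive_eq (is_deriveM fb fb) _.
by rewrite -[_ *: df]/(_ * df); ring.
Qed.

Lemma is_derive_kl_div {f df} {a x : R} : 0 <= a -> (0 < a -> 0 < f x) ->
  is_derive x 1 f df -> is_derive x 1 (fun y => kl_div a (f y)) ((1 - a / f x) * df).
Proof.
rewrite le_eqVlt => /orP[/eqP<- _|a0 /(_ a0) fx0 fdf].
  under eq_fun do rewrite /kl_div mul0r add0r subr0.
  by rewrite mul0r subr0 mul1r.
have afx_gt0 : 0 < a * (f x)^-1 by rewrite mulr_gt0 ?invr_gt0.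
have fV : is_derive x 1 (fun y => a * (f y)^-1) (a * (- (f x) ^- 2 *: df)).
  by apply: is_deriveZ; apply: is_deriveV; rewrite ?gt_eqF.
have lnfV := is_derive1_comp (g := fun y => a * (f y)^-1) (is_derive1_ln afx_gt0) fV.
have := is_deriveB (is_deriveD (is_deriveZ a lnfV) fdf) (is_derive_cst a x 1).
move/is_derive_eq; apply; rewrite subr0 -![_ *: _]/(_ * _).
by field; rewrite !gt_eqF.
Qed.

Lemma derive1_eq0_itv {f} {k t0 t1 t : R} :
  (forall z, t0 < z < t1 -> f z = k) -> t0 < t < t1 -> derive1 f t = 0.
Proof.
move=> f_cst t_in; rewrite derive1E (@near_eq_derive _ _ _ f (cst k)) ?derive_cst //.
have := @near_in_itvoo _ t0 t1 t; rewrite in_itv /= => /(_ t_in).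
by apply: filterS => z; rewrite in_itv /=; apply: f_cst.
Qed.

End RealFacts.

Section Gibbs.
Context {R : realType} {I : finType}.
Variable tau : R.
Hypothesis tau_gt0 : 0 < tau.
Implicit Types (w c : I -> R).

Definition gibbs w c : R :=
  \sum_i w i * c i - tau * \sum_i w i * ln (w i / \sum_j w j).

Lemma gibbsZ (k : R) w c : 0 < k -> gibbs (fun i => k * w i) c = k * gibbs w c.
Proof.
move=> k0; rewrite /gibbs -mulr_sumr.
under eq_bigr do rewrite -mulrA.
under [X in _ - tau * X]eq_bigr do rewrite -mulrA invfM mulrACA mulfV ?gt_eqF // mul1r.
by rewrite -!mulr_sumr; ring.
Qed.

Lemma gibbs_max_eq0 w0 c : (forall i, 0 < w0 i) ->
  (forall w, (forall i, 0 < w i) -> gibbs w c <= gibbs w0 c) -> gibbs w0 c = 0.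
Proof.
move=> w0_gt0 w0_max.
have two_gt0 : (0 : R) < 2 by [].
have half_gt0 : (0 : R) < 2^-1 by rewrite invr_gt0.
have := w0_max _ (fun i => mulr_gt0 two_gt0 (w0_gt0 i)).
have := w0_max _ (fun i => mulr_gt0 half_gt0 (w0_gt0 i)).
by rewrite !gibbsZ ?invr_gt0 //; lra.
Qed.

Lemma gibbs_exp c :
  gibbs (fun i => expR (c i / tau)) c
  = tau * (\sum_i expR (c i / tau)) * ln (\sum_i expR (c i / tau)).
Proof.
rewrite /gibbs mulr_sumr -sumrB [RHS]mulrAC [RHS]mulr_sumr.
apply: eq_bigr => i _.
have Z_gt0 := sumr_gt0_at i (fun j => expR_gt0 (c j / tau)).
rewrite ln_div ?posrE ?expR_gt0 //.
by rewrite expRK; field; rewrite gt_eqF.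
Qed.

Lemma gibbs_kl_div w c (i0 : I) : (forall i, 0 < w i) ->
  tau * (\sum_j w j) * \sum_i kl_div (w i / \sum_j w j) (expR (c i / tau))
  = tau * (\sum_j w j) * (\sum_i expR (c i / tau) - 1) - gibbs w c.
Proof.
move=> w_gt0; rewrite /gibbs /kl_div; set W := \sum_j w j.
have W_gt0 : 0 < W := sumr_gt0_at i0 w_gt0.
have sum_pi : \sum_i w i / W = 1 by rewrite -mulr_suml divff ?gt_eqF.
clearbody W; rewrite -sum_pi -sumrB !mulr_sumr -!sumrB.
apply: eq_bigr => i _; rewrite ln_div ?posrE ?divr_gt0 ?expR_gt0 // expRK.
by field; rewrite !gt_eqF.
Qed.

Lemma gibbs_argmax w0 c : (forall i, 0 < w0 i) ->
  (forall w, (forall i, 0 < w i) -> gibbs w c <= gibbs w0 c) ->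
  forall i, tau * ln (w0 i / \sum_j w0 j) = c i.
Proof.
move=> w0_gt0 w0_max i.
pose q j := expR (c j / tau); pose W := \sum_j w0 j.
have q_gt0 j : 0 < q j by exact: expR_gt0.
have W_gt0 : 0 < W := sumr_gt0_at i w0_gt0.
have G0 : gibbs w0 c = 0 by exact: gibbs_max_eq0.
have Z_le1 : \sum_j q j <= 1.
  have := w0_max q q_gt0; rewrite G0 gibbs_exp pmulr_rle0 ?mulr_gt0 ?(sumr_gt0_at i) //.
  by apply: contraTT; rewrite -!ltNge => /ln_gt0.
have kl_ge0 j : 0 <= kl_div (w0 j / W) (q j) by rewrite kl_div_ge0 ?divr_gt0.
have : \sum_j kl_div (w0 j / W) (q j) = 0.
  apply/eqP; rewrite eq_le sumr_ge0 // andbT.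
  rewrite -(pmulr_rle0 _ (mulr_gt0 tau_gt0 W_gt0)) gibbs_kl_div // G0 subr0.
  by rewrite pmulr_rle0 ?mulr_gt0 // subr_le0.
move=> /(psumr_eq0P (fun j _ => kl_ge0 j))/(_ i isT)/kl_div_eq0.
rewrite divr_gt0 // q_gt0 => /(_ isT isT) ->.
by rewrite /q expRK; field; rewrite gt_eqF.
Qed.

End Gibbs.

Section LogRatioPairing.
Context {R : realType} {I : finType}.
Implicit Types (x y : I -> R).

Definition logratio_pairing x y : R :=
  \sum_i (x i - y i) * (ln (x i / \sum_j x j) - ln (y i / \sum_j y j)).

Lemma logratio_pairing_kl_div x y (i0 : I) :
  (forall i, 0 < x i) -> (forall i, 0 < y i) ->
  logratio_pairing x y
  = \sum_i ((\sum_j x j) * kl_div (x i / \sum_j x j) (y i / \sum_j y j)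
          + (\sum_j y j) * kl_div (y i / \sum_j y j) (x i / \sum_j x j)).
Proof.
move=> x_gt0 y_gt0; rewrite /logratio_pairing; set X := \sum_j x j; set Y := \sum_j y j.
have X_gt0 : 0 < X := sumr_gt0_at i0 x_gt0.
have Y_gt0 : 0 < Y := sumr_gt0_at i0 y_gt0.
have mass_shift : \sum_i (X - Y) * (x i / X - y i / Y) = 0.
  by rewrite -mulr_sumr sumrB -!mulr_suml !divff ?gt_eqF // subrr mulr0.
clearbody X Y.
have pairing_shift i : (x i - y i) * (ln (x i / X) - ln (y i / Y))
    = X * kl_div (x i / X) (y i / Y) + Y * kl_div (y i / Y) (x i / X)
      + (X - Y) * (x i / X - y i / Y).
  rewrite /kl_div !ln_div ?posrE ?divr_gt0 ?x_gt0 ?y_gt0 //.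
  by field; rewrite !gt_eqF.
by rewrite (eq_bigr _ (fun i _ => pairing_shift i)) big_split /= mass_shift addr0.
Qed.

Lemma logratio_pairing_ge0 x y : (forall i, 0 < x i) -> (forall i, 0 < y i) ->
  0 <= logratio_pairing x y.
Proof.
move=> x_gt0 y_gt0; have [i0 _|I0] := pickP (@predT I); last first.
  by rewrite /logratio_pairing big_pred0.
rewrite (logratio_pairing_kl_div _ _ i0) //; apply: sumr_ge0 => i _.
have X_gt0 := sumr_gt0_at i x_gt0; have Y_gt0 := sumr_gt0_at i y_gt0.
by rewrite addr_ge0 // mulr_ge0 ?(ltW X_gt0) ?(ltW Y_gt0)
  ?kl_div_ge0 ?divr_gt0 ?x_gt0 ?y_gt0.
Qed.

Lemma logratio_pairing_eq0 x y : (forall i, 0 < x i) -> (forall i, 0 < y i) ->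
  logratio_pairing x y = 0 -> forall i, x i / \sum_j x j = y i / \sum_j y j.
Proof.
move=> x_gt0 y_gt0 + i; rewrite (logratio_pairing_kl_div _ _ i) //.
set X := \sum_j x j; set Y := \sum_j y j.
have X_gt0 : 0 < X := sumr_gt0_at i x_gt0.
have Y_gt0 : 0 < Y := sumr_gt0_at i y_gt0.
have terms_ge0 j :
    0 <= X * kl_div (x j / X) (y j / Y) /\ 0 <= Y * kl_div (y j / Y) (x j / X).
  by split; rewrite mulr_ge0 ?(ltW X_gt0) ?(ltW Y_gt0) ?kl_div_ge0 ?divr_gt0 ?x_gt0 ?y_gt0.
move=> /(psumr_eq0P (fun j _ => addr_ge0 (terms_ge0 j).1 (terms_ge0 j).2))/(_ i isT)/eqP.
rewrite paddr_eq0 ?(terms_ge0 i).1 ?(terms_ge0 i).2 // mulf_eq0 gt_eqF //=.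
by move=> /andP[/eqP + _]; apply: kl_div_eq0; rewrite divr_gt0.
Qed.

End LogRatioPairing.

Section Optimality.
Context {R : realType} {I : finType}.

Lemma max_sum_components {T : Type} (Q : T -> Prop) (F : I -> T -> R) (x0 : I -> T) :
  (forall i, Q (x0 i)) ->
  (forall x, (forall i, Q (x i)) -> \sum_i F i (x i) <= \sum_i F i (x0 i)) ->
  forall i y, Q y -> F i y <= F i (x0 i).
Proof.
move=> Qx0 x0_max i y Qy; pose x j := if j == i then y else x0 j.
have Qx j : Q (x j) by rewrite /x; case: eqP.
have := x0_max x Qx; rewrite (bigD1 i) //= [X in _ <= X](bigD1 i) //=.
have -> : \sum_(j | j != i) F j (x j) = \sum_(j | j != i) F j (x0 j).
  by apply: eq_bigr => j /negbTE ji; rewrite /x ji.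
by rewrite lerD2r /x eqxx.
Qed.

Lemma quadratic_argmin (k : R) (b x0 : I -> R) : 0 < k ->
  (forall x, k / 2 * \sum_i x0 i ^+ 2 - \sum_i x0 i * b i
             <= k / 2 * \sum_i x i ^+ 2 - \sum_i x i * b i) ->
  forall i, k * x0 i = b i.
Proof.
move=> k_gt0 x0_min i; pose d j := (k * x0 j - b j) / k.
have := x0_min (fun j => x0 j - d j).
have -> : k / 2 * \sum_j (x0 j - d j) ^+ 2 - \sum_j (x0 j - d j) * b j
    = k / 2 * \sum_j x0 j ^+ 2 - \sum_j x0 j * b j - k / 2 * \sum_j d j ^+ 2.
  rewrite !mulr_sumr -!sumrB; apply: eq_bigr => j _; rewrite /d.
  by field; rewrite gt_eqF.
move=> le_V; have : k / 2 * \sum_j d j ^+ 2 <= 0 by lra.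
rewrite pmulr_rle0 ?divr_gt0 // => sum_d_le0.
have sum_d0 : \sum_j d j ^+ 2 = 0.
  by apply/eqP; rewrite eq_le sum_d_le0 sumr_ge0 // => j _; apply: sqr_ge0.
move: sum_d0 => /(psumr_eq0P (fun j _ => sqr_ge0 (d j)))/(_ i isT)/eqP.
by rewrite sqrf_eq0 mulf_eq0 invr_eq0 (gt_eqF k_gt0) orbF subr_eq0 => /eqP.
Qed.

End Optimality.

Section MDP.
Context {R : realType} {S A : finType}.
Context {P : S -> A -> S -> R} {r : S -> A -> R} {gamma tau alpha c : R}.

Local Notation K := (Kmat gamma P).

Definition Kflow (u : S -> A -> R) (s' : S) : R := \sum_s \sum_a K s a s' * u s a.

Lemma KflowB (u u' : S -> A -> R) s' :
  Kflow (fun s a => u s a - u' s a) s' = Kflow u s' - Kflow u' s'.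
Proof.
rewrite /Kflow -sumrB; apply: eq_bigr => s _; rewrite -sumrB.
by apply: eq_bigr => a _; rewrite mulrBr.
Qed.

Lemma KflowE (u : S -> A -> R) s' :
  Kflow u s' = utilde u s' - gamma * \sum_s \sum_a P s a s' * u s a.
Proof.
rewrite /Kflow /Kmat.
under eq_bigr do rewrite (eq_bigr _ (fun a _ => mulrBl _ _ _)) sumrB.
rewrite sumrB mulr_sumr; congr (_ - _); last first.
  by apply: eq_bigr => s _; rewrite mulr_sumr; apply: eq_bigr => a _; rewrite mulrA.
rewrite (bigD1 s') //= [X in _ + X]big1 ?addr0 => [|s /negbTE ss'].
  by rewrite /utilde; apply: eq_bigr => a _; rewrite eqxx mul1r.
by apply: big1 => a _; rewrite ss' mul0r.
Qed.

Lemma sum_mul_Kflow (u : S -> A -> R) (w : S -> R) :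
  \sum_s \sum_a u s a * (\sum_s' K s a s' * w s') = \sum_s' w s' * Kflow u s'.
Proof.
under eq_bigr => s _ do under eq_bigr => a _ do rewrite mulr_sumr.
under eq_bigr => s _ do rewrite exchange_big.
rewrite exchange_big; apply: eq_bigr => s' _; rewrite mulr_sumr.
apply: eq_bigr => s _; rewrite mulr_sumr; apply: eq_bigr => a _; ring.
Qed.

Section Contraction.
Hypothesis P_ge0 : forall s a s', 0 <= P s a s'.
Hypothesis P_sum1 : forall s a, \sum_s' P s a s' = 1.
Hypotheses (gamma_ge0 : 0 <= gamma) (gamma_lt1 : gamma < 1).

(* Summing [|\sum_a y s' a| <= gamma \sum_(s, a) P s a s' |y s a|] over [s']
   gives [N <= gamma N] for the [l1]-norm [N] of [y]. *)
Lemma Kflow_eq0 (y : S -> A -> R) :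
  (forall s, `|\sum_a y s a| = \sum_a `|y s a|) ->
  (forall s', Kflow y s' = 0) -> forall s a, y s a = 0.
Proof.
move=> no_cancel y_flow0; pose N := \sum_s \sum_a `|y s a|.
have state_le s' : \sum_a `|y s' a| <= gamma * \sum_s \sum_a P s a s' * `|y s a|.
  have := y_flow0 s'; rewrite KflowE /utilde => /eqP; rewrite subr_eq0 => /eqP flow_s'.
  rewrite -no_cancel flow_s' normrM ger0_norm // ler_wpM2l //.
  apply: le_trans (ler_norm_sum _ _ _) _; apply: ler_sum => s _.
  apply: le_trans (ler_norm_sum _ _ _) _; apply: ler_sum => a _.
  by rewrite normrM ger0_norm.
have N_le : N <= gamma * N.
  apply: le_trans (ler_sum _ (fun s' _ => state_le s')) _.
  rewrite -mulr_sumr exchange_big /= ler_wpM2l //; apply: ler_sum => s _.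
  rewrite exchange_big /=; apply: ler_sum => a _.
  by rewrite -mulr_suml P_sum1 mul1r.
have N0 : N = 0.
  apply/eqP; rewrite eq_le sumr_ge0 ?andbT => [|s _]; last by apply: sumr_ge0.
  have : (1 - gamma) * N <= 0 by rewrite mulrBl mul1r subr_le0.
  by rewrite pmulr_rle0 // subr_gt0.
move=> s a; apply/eqP; rewrite -normr_eq0; apply/eqP; move: N0.
move=> /(psumr_eq0P (fun s _ => sumr_ge0 _ (fun a _ => normr_ge0 (y s a))))/(_ s isT).
by move=> /(psumr_eq0P (fun a _ => normr_ge0 (y s a)))/(_ a isT).
Qed.

Lemma pol_Kflow_inj {u w : S -> A -> R} :
  (forall s a, 0 < u s a) -> (forall s a, 0 < w s a) ->
  (forall s a, pol u s a = pol w s a) -> (forall s', Kflow u s' = Kflow w s') -> u = w.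
Proof.
move=> u_gt0 w_gt0 same_pol same_flow.
pose y s a := u s a - w s a; pose x s := utilde u s - utilde w s.
have mass_pol (z : S -> A -> R) s a :
    (forall b, 0 < z s b) -> z s a = utilde z s * pol z s a.
  by move=> z_gt0; rewrite /pol; field; rewrite gt_eqF // (sumr_gt0_at a z_gt0).
have y_scaled s a : y s a = x s * pol w s a.
  by rewrite /y /x (mass_pol u s a) // (mass_pol w s a) // same_pol mulrBl.
have y0 : forall s a, y s a = 0.
  apply: Kflow_eq0 => [s|s']; last by rewrite KflowB same_flow subrr.
  have pol_ge0 a : 0 <= pol w s a by rewrite ltW // divr_gt0 // (sumr_gt0_at a (w_gt0 s)).
  under eq_bigr do rewrite y_scaled.
  under [RHS]eq_bigr do rewrite y_scaled normrM (ger0_norm (pol_ge0 _)).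
  by rewrite -!mulr_sumr normrM (ger0_norm (sumr_ge0 _ (fun a _ => pol_ge0 a))).
apply/funext => s; apply/funext => a; apply/eqP; rewrite -subr_eq0; exact/eqP/y0.
Qed.

End Contraction.

Lemma Efun_Kflow (v : S -> R) (u : S -> A -> R) :
  Efun alpha tau gamma P r v u
  = alpha / 2 * \sum_s v s ^+ 2 - \sum_s v s * Kflow u s
    + \sum_s \sum_a u s a * r s a - tau * \sum_s \sum_a u s a * ln (pol u s a).
Proof.
rewrite /Efun /pol -sum_mul_Kflow.
have -> : \sum_s \sum_a u s a * (r s a - \sum_s' K s a s' * v s')
    = \sum_s \sum_a u s a * r s a - \sum_s \sum_a u s a * \sum_s' K s a s' * v s'.
  rewrite -sumrB; apply: eq_bigr => s _; rewrite -sumrB.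
  by apply: eq_bigr => a _; rewrite mulrBr.
by ring.
Qed.

Lemma Efun_gibbs (v : S -> R) (u : S -> A -> R) :
  Efun alpha tau gamma P r v u
  = alpha / 2 * \sum_s v s ^+ 2
    + \sum_s gibbs tau (u s) (fun a => r s a - \sum_s' K s a s' * v s').
Proof. by rewrite /Efun /gibbs /utilde sumrB -mulr_sumr addrA. Qed.

Hypothesis c_neq1 : c != 1.

(* The symmetric preconditioner [utilde u s (diag pi - c pi pi^T)] maps the
   gradient of the [u]-part of [Lc] (with reference point [w]) to [u - w]. *)
Lemma u_rhs_pairing (v : S -> R) (u w : S -> A -> R) s :
  (forall a, 0 < u s a) ->
  \sum_a (1 - w s a / u s a) * u_rhs tau gamma c P r v u s a
  + c / (1 - c) * ((1 - utilde w s / utilde u s)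
                   * \sum_a u_rhs tau gamma c P r v u s a)
  = - \sum_a (u s a - w s a) * gvec tau gamma P r v u s a.
Proof.
move=> u_gt0; have [a0 _|A0] := pickP (@predT A); last first.
  by rewrite !big_pred0 // !mulr0 addr0 oppr0.
set g := gvec tau gamma P r v u s; set U := utilde u s.
set m := \sum_b pol u s b * g b.
have U_gt0 : 0 < U := sumr_gt0_at a0 u_gt0.
have du a : u_rhs tau gamma c P r v u s a = - (u s a * g a - c * m * u s a).
  by rewrite /u_rhs /pol -/U -/g -/m; field; rewrite gt_eqF.
have sum_ug : \sum_a u s a * g a = U * m.
  by rewrite /m mulr_sumr; apply: eq_bigr => a _; rewrite /pol -/U; field; rewrite gt_eqF.
have sum_du : \sum_a u_rhs tau gamma c P r v u s a = - ((1 - c) * U * m).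
  rewrite (eq_bigr _ (fun a _ => du a)) sumrN sumrB -mulr_sumr sum_ug.
  by rewrite /U /utilde; ring.
clearbody m; have pair_du : \sum_a (1 - w s a / u s a) * u_rhs tau gamma c P r v u s a
    = - \sum_a (u s a - w s a) * g a + c * m * (U - utilde w s).
  rewrite (eq_bigr _ (fun a _ => congr1 _ (du a))).
  rewrite -sumrN /U /utilde -sumrB mulr_sumr -big_split /=; apply: eq_bigr => a _.
  by field; rewrite gt_eqF.
rewrite pair_du sum_du; field.
by rewrite gt_eqF //= subr_eq0 eq_sym.
Qed.

Section Saddle.
Context {vstar : S -> R} {ustar : S -> A -> R}.
Hypotheses (tau_gt0 : 0 < tau) (alpha_gt0 : 0 < alpha).
Hypothesis saddle : is_saddle alpha tau gamma P r vstar ustar.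

Lemma saddle_Kflow s' : alpha * vstar s' = Kflow ustar s'.
Proof.
apply: quadratic_argmin => // v; have := saddle.2.1 v.
by rewrite !Efun_Kflow; lra.
Qed.

Lemma saddle_policy s a :
  tau * ln (pol ustar s a) = r s a - \sum_s' K s a s' * vstar s'.
Proof.
pose C s a := r s a - \sum_s' K s a s' * vstar s'.
rewrite /pol /utilde.
apply: (gibbs_argmax _ tau_gt0 (ustar s) (C s) (saddle.1 s)) => w w_gt0.
pose Q (w : A -> R) := forall a, 0 < w a.
apply: (max_sum_components Q (fun s w => gibbs tau w (C s))) => // [s'|u u_gt0].
  exact: saddle.1.
by have := saddle.2.2 u u_gt0; rewrite !Efun_gibbs lerD2l.
Qed.

Definition dissipation (v : S -> R) (u : S -> A -> R) : R :=
  alpha * \sum_s (v s - vstar s) ^+ 2 + tau * \sum_s logratio_pairing (u s) (ustar s).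

Lemma Lc_rate_eq (v : S -> R) (u : S -> A -> R) : (forall s a, 0 < u s a) ->
  alpha * \sum_s (v s - vstar s) * v_rhs alpha gamma P v u s
  + tau * (\sum_s \sum_a (1 - ustar s a / u s a) * u_rhs tau gamma c P r v u s a
           + c / (1 - c) * \sum_s (1 - utilde ustar s / utilde u s)
                                  * \sum_a u_rhs tau gamma c P r v u s a)
  = - dissipation v u.
Proof.
move=> u_gt0; pose X s' := Kflow (fun s a => u s a - ustar s a) s'.
have v_part s' : alpha * ((v s' - vstar s') * v_rhs alpha gamma P v u s')
    = - (alpha * (v s' - vstar s') ^+ 2) + (v s' - vstar s') * X s'.
  rewrite /X KflowB -saddle_Kflow /v_rhs -/(Kflow u s').
  by field; rewrite gt_eqF.
have g_split s a : tau * gvec tau gamma P r v u s a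
    = tau * (ln (pol u s a) - ln (pol ustar s a))
      + \sum_s' K s a s' * (v s' - vstar s').
  rewrite /gvec mulrBr (mulrBr tau (ln _)) saddle_policy mulrA mulfV ?gt_eqF //.
  under [X in _ = _ + X]eq_bigr do rewrite mulrBr.
  by rewrite sumrB; ring.
have u_part : tau * \sum_s - \sum_a (u s a - ustar s a) * gvec tau gamma P r v u s a
    = - (tau * \sum_s logratio_pairing (u s) (ustar s)) - \sum_s' (v s' - vstar s') * X s'.
  rewrite !mulr_sumr /X -sum_mul_Kflow -opprD -big_split /= -sumrN.
  apply: eq_bigr => s _; rewrite mulrN /logratio_pairing !mulr_sumr -big_split /=.
  congr (- _); apply: eq_bigr => a _; rewrite mulrCA g_split /pol /utilde; ring.
rewrite [c / (1 - c) * _]mulr_sumr -big_split /=.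
rewrite (eq_bigr _ (fun s _ => u_rhs_pairing v u ustar s (u_gt0 s))) u_part.
rewrite [alpha * _]mulr_sumr (eq_bigr _ (fun s _ => v_part s)) big_split /= sumrN.
by rewrite /dissipation [in RHS]mulr_sumr; ring.
Qed.

Lemma dissipation_ge0 (v : S -> R) (u : S -> A -> R) :
  (forall s a, 0 < u s a) -> 0 <= dissipation v u.
Proof.
move=> u_gt0; apply: addr_ge0; apply: mulr_ge0; try exact: ltW.
  by apply: sumr_ge0 => s _; exact: sqr_ge0.
by apply: sumr_ge0 => s _; apply: logratio_pairing_ge0 => //; exact: saddle.1.
Qed.

Lemma dissipation_eq0 (v : S -> R) (u : S -> A -> R) :
  (forall s a, 0 < u s a) -> dissipation v u = 0 ->
  v = vstar /\ forall s a, pol u s a = pol ustar s a.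
Proof.
move=> u_gt0; have pairing_ge0 s : 0 <= logratio_pairing (u s) (ustar s).
  by apply: logratio_pairing_ge0 => //; exact: saddle.1.
have dev_ge0 s : 0 <= (v s - vstar s) ^+ 2 by exact: sqr_ge0.
move=> /eqP; rewrite paddr_eq0; first last.
- by apply: mulr_ge0; [exact: ltW | exact: sumr_ge0].
- by apply: mulr_ge0; [exact: ltW | exact: sumr_ge0].
rewrite !mulf_eq0 (gt_eqF alpha_gt0) (gt_eqF tau_gt0) /=.
move=> /andP[/eqP dev0 /eqP pairing0]; split.
  apply/funext => s; apply/eqP; rewrite -subr_eq0 -sqrf_eq0; apply/eqP.
  by move: dev0 => /(psumr_eq0P (fun s _ => dev_ge0 s))/(_ s isT).
move=> s; apply: logratio_pairing_eq0 => //; first exact: saddle.1.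
by move: pairing0 => /(psumr_eq0P (fun s _ => pairing_ge0 s))/(_ s isT).
Qed.

Lemma is_derive_Lc (v : R -> S -> R) (u : R -> S -> A -> R) (t : R)
    (dv : S -> R) (du : S -> A -> R) :
  (forall s a, 0 < u t s a) ->
  (forall s, is_derive t 1 (fun x => v x s) (dv s)) ->
  (forall s a, is_derive t 1 (fun x => u x s a) (du s a)) ->
  is_derive t 1 (fun x => Lc alpha tau c vstar ustar (v x) (u x))
    (alpha * \sum_s (v t s - vstar s) * dv s
     + tau * (\sum_s \sum_a (1 - ustar s a / u t s a) * du s a
              + c / (1 - c) * \sum_s (1 - utilde ustar s / utilde (u t) s)
                                     * \sum_a du s a)).
Proof.
move=> u_gt0 v_der u_der.
have utilde_der s : is_derive t 1 (fun x => utilde (u x) s) (\sum_a du s a).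
  exact: is_derive_fsum.
have utilde_gt0 s : 0 < utilde ustar s -> 0 < utilde (u t) s.
  have [a _ _|A0] := pickP (@predT A); first exact: (sumr_gt0_at a (u_gt0 s)).
  by rewrite /utilde big_pred0 ?ltxx.
have v_term := is_derive_fsum (fun s => is_derive_sqr_sub (vstar s) (v_der s)).
have u_term := is_derive_fsum (fun s => is_derive_fsum (fun a =>
  is_derive_kl_div (ltW (saddle.1 s a)) (fun _ => u_gt0 s a) (u_der s a))).
have utilde_term := is_derive_fsum (fun s => is_derive_kl_div
  (sumr_ge0 _ (fun a _ => ltW (saddle.1 s a))) (@utilde_gt0 s) (utilde_der s)).
apply: is_derive_eq (is_deriveD (is_deriveZ (alpha / 2) v_term)
  (is_deriveZ tau (is_deriveD u_term (is_deriveZ (c / (1 - c)) utilde_term)))) _.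
rewrite -![_ *: _]/(_ * _); congr (_ + _).
by rewrite !mulr_sumr; apply: eq_bigr => s _; field.
Qed.

Lemma is_derive_Lc_trajectory t0 t1 (v : R -> S -> R) (u : R -> S -> A -> R) t :
  is_trajectory alpha tau gamma c P r t0 t1 v u -> t0 < t < t1 ->
  is_derive t 1 (fun x => Lc alpha tau c vstar ustar (v x) (u x))
    (- dissipation (v t) (u t)).
Proof.
move=> traj t_in; have [u_gt0 [v_der u_der]] := traj t t_in.
rewrite -Lc_rate_eq //; apply: is_derive_Lc => // [s|s a].
  by rewrite -(v_der s).2 derive1E; apply: derivableP; exact: (v_der s).1.
by rewrite -(u_der s a).2 derive1E; apply: derivableP; exact: (u_der s a).1.
Qed.

End Saddle.
End MDP.

Theorem lemma3p2 (R : realType) (S A : finType)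
    (P : S -> A -> S -> R) (r : S -> A -> R) (gamma tau alpha c : R)
    (hP0 : forall s a s', 0 <= P s a s')
    (hP1 : forall s a, \sum_(s' : S) P s a s' = 1)
    (hr : forall s a, 0 <= r s a)
    (hgamma : 0 < gamma < 1) (htau : 0 < tau) (halpha : 0 < alpha)
    (hc : 0 < c < 1)
    (vstar : S -> R) (ustar : S -> A -> R)
    (hsaddle : is_saddle alpha tau gamma P r vstar ustar)
    (t0 t1 : R) (ht : t0 < t1)
    (v : R -> S -> R) (u : R -> S -> A -> R)
    (htraj : is_trajectory alpha tau gamma c P r t0 t1 v u) :
  (forall t, t0 < t < t1 ->
     derivable (fun x => Lc alpha tau c vstar ustar (v x) (u x)) t 1 /\
     derive1 (fun x => Lc alpha tau c vstar ustar (v x) (u x)) t <= 0) /\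
  ((forall t, t0 < t < t1 ->
      derive1 (fun x => Lc alpha tau c vstar ustar (v x) (u x)) t = 0) ->
   forall t, t0 < t < t1 -> v t = vstar /\ u t = ustar).
Proof.
have c_neq1 : c != 1 by case/andP: hc => _ /lt_eqF ->.
have Lc_der t := is_derive_Lc_trajectory c_neq1 htau halpha hsaddle t0 t1 v u t htraj.
split=> [t t_in|Lc_stat t t_in].
  have der := Lc_der t t_in; split; first exact: ex_derive.
  rewrite derive1E derive_val oppr_le0.
  exact: dissipation_ge0 htau halpha hsaddle _ _ (htraj t t_in).1.
have stationary z : t0 < z < t1 ->
    v z = vstar /\ forall s a, pol (u z) s a = pol ustar s a.
  move=> z_in; have der := Lc_der z z_in.
  apply: dissipation_eq0 htau halpha hsaddle _ _ (htraj z z_in).1 _.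
  by apply/eqP; rewrite -oppr_eq0 -(Lc_stat z z_in) derive1E derive_val.
have [u_gt0 [v_der _]] := htraj t t_in; have [vt_eq pol_eq] := stationary t t_in.
have /andP[gamma_gt0 gamma_lt1] := hgamma.
split=> //; apply: (pol_Kflow_inj hP0 hP1 (ltW gamma_gt0) gamma_lt1 u_gt0 hsaddle.1 pol_eq).
move=> s'; rewrite -(saddle_Kflow halpha hsaddle).
have := derive1_eq0_itv (fun z z_in => congr1 (fun w => w s') (stationary z z_in).1) t_in.
rewrite (v_der s').2 /v_rhs vt_eq => /eqP; rewrite oppr_eq0 subr_eq0 => /eqP ->.
by rewrite mulrA mulfV ?gt_eqF ?mul1r.
Qed.
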